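(* Define $f_n\in\mathbb Z[X]$ by $f_0=0$, $f_1=1$, $f_{n+1}=Xf_n-f_{n-1}$. Let $R$ be a commutative ring and $M\in M_2(R)$ with $\det M=1$ such that at least one off-diagonal entry of $M$ is not a zero divisor. If $n=2k+1$ is an odd positive integer, then $M^n=-I$ holds if and only if $t=\operatorname{tr}M$ satisfies $f_{k+1}(t)-f_k(t)=0$. *)

From HB Require Import structures.
From mathcomp Require Import all_boot all_order all_algebra.
Set Implicit Arguments. Unset Strict Implicit. Unset Printing Implicit Defensive.
Import GRing.Theory.
Local Open Scope ring_scope.

(* pair (f_n, f_{n+1}) with f_0 = 0, f_1 = 1, f_{n+1} = X f_n - f_{n-1} in Z[X] *)
Fixpoint fpair (n : nat) : {poly int} * {poly int} :=
  match n with
  | 0%N => (0, 1)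
  | m.+1 => let p := fpair m in (p.2, 'X * p.2 - p.1)
  end.

Definition fpoly (n : nat) : {poly int} := (fpair n).1.

Definition evalZ (R : nzRingType) (p : {poly int}) (x : R) : R :=
  (map_poly (fun z : int => z%:~R) p).[x].

Definition not_zero_divisor (R : comNzRingType) (a : R) : Prop :=
  forall x : R, a * x = 0 -> x = 0.

From HB Require Import structures.
From mathcomp Require Import all_boot all_order all_algebra ring.
Set Implicit Arguments. Unset Strict Implicit. Unset Printing Implicit Defensive.
Import GRing.Theory.
Local Open Scope ring_scope.

(* Write a_n = f_n(t) with t = tr M.  Since det M = 1, the
   Cayley-Hamilton relation M^2 = t M - 1 holds, and N := t - M is a two-sided
   inverse of M.  Induction along f_{n+2} = X f_{n+1} - f_n then gives
     M^(n+1) = a_(n+1) M - a_n     and     N^n = a_(n+1) - a_n M,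
   whence the factorisation
     M^(2k+1) + 1 = M^k (M^(k+1) + N^k) = M^k ((a_(k+1) - a_k) (M + 1)).
   As M^k is invertible, M^(2k+1) = -1 iff the scalar d = a_(k+1) - a_k
   annihilates M + 1; the off-diagonal entries of M + 1 are those of M, so d = 0
   when one of them is not a zero divisor, and conversely d = 0 clearly suffices. *)

Section FpolyEval.
Variables (R : comNzRingType) (t : R).

Lemma evalZ_fpoly0 : evalZ (fpoly 0) t = 0.
Proof. by rewrite /evalZ /fpoly /= map_poly0 horner0. Qed.

Lemma evalZ_fpoly1 : evalZ (fpoly 1) t = 1.
Proof. by rewrite /evalZ /fpoly /= rmorph1 hornerC. Qed.

Lemma evalZ_fpolySS n :
  evalZ (fpoly n.+2) t = t * evalZ (fpoly n.+1) t - evalZ (fpoly n) t.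
Proof.
rewrite /evalZ /fpoly /= rmorphB rmorphM /= map_polyX.
by rewrite hornerD hornerN mulrC hornerMX mulrC.
Qed.

End FpolyEval.

Lemma ord2P (i : 'I_2) : i = 0 \/ i = 1.
Proof. by case: i => [[|[|//]] p]; [left|right]; apply/val_inj. Qed.

Lemma det_mx22 (R : comNzRingType) (M : 'M[R]_2) :
  \det M = M 0 0 * M 1 1 - M 0 1 * M 1 0.
Proof.
rewrite (expand_det_row _ 0) !big_ord_recl big_ord0 /cofactor !det_mx11 !mxE /=.
have -> : lift 0 (0 : 'I_1) = 1 :> 'I_2 by apply/val_inj.
have -> : lift 1 (0 : 'I_1) = 0 :> 'I_2 by apply/val_inj.
by rewrite expr0 expr1 mul1r addr0 mulN1r mulrN.
Qed.

Lemma mx22_sqr_det1 (R : comNzRingType) (M : 'M[R]_2) :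
  \det M = 1 -> M * M = \tr M *: M - 1.
Proof.
rewrite det_mx22 => detM; apply/matrixP => i j.
rewrite -mulmxE !mxE /mxtrace !big_ord_recl !big_ord0.
have -> : lift ord0 ord0 = 1 :> 'I_2 by apply/val_inj.
rewrite -[ord0]/(0 : 'I_2).
by case: (ord2P i) => ->; case: (ord2P j) => -> /=; rewrite -detM; ring.
Qed.

Lemma scale_mx22_eq0 (R : comNzRingType) (d : R) (A : 'M[R]_2) :
  not_zero_divisor (A 0 1) \/ not_zero_divisor (A 1 0) -> d *: A = 0 -> d = 0.
Proof.
move=> nzdA /matrixP dA.
by case: nzdA => nzd; apply: nzd; [have := dA 0 1 | have := dA 1 0];
  rewrite !mxE mulrC.
Qed.

Section QuadraticMatrix.
Variables (R : comNzRingType) (n : nat) (t : R) (M : 'M[R]_n.+1).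
Hypothesis sqrM : M * M = t *: M - 1.

Let a m := evalZ (fpoly m) t.

Let N := t *: 1 - M.

Lemma mulM_inv : M * N = 1.
Proof. by rewrite /N mulrBr -scalerAr mulr1 sqrM opprB addrC subrK. Qed.

Lemma commM_inv : GRing.comm M N.
Proof. by rewrite /GRing.comm /N mulrBr mulrBl -scalerAr -scalerAl mulr1 mul1r. Qed.

Lemma mulM_invX m : M ^+ m * N ^+ m = 1.
Proof. by rewrite -exprMn_comm ?mulM_inv ?expr1n //; apply: commM_inv. Qed.

Lemma exprSM m : M ^+ m.+1 = a m.+1 *: M - a m *: 1.
Proof.
elim: m => [|m IH].
  by rewrite expr1 /a evalZ_fpoly1 evalZ_fpoly0 scale1r scale0r subr0.
rewrite exprSr IH /a evalZ_fpolySS mulrBl -scalerAl sqrM -scalerAl mul1r.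
by rewrite scalerBr scalerA scalerBl; apply/matrixP => i j; rewrite !mxE; ring.
Qed.

Lemma expr_inv m : N ^+ m = a m.+1 *: 1 - a m *: M.
Proof.
elim: m => [|m IH].
  by rewrite expr0 /a evalZ_fpoly1 evalZ_fpoly0 scale1r scale0r subr0.
rewrite exprSr IH /a evalZ_fpolySS /N mulrBl !mulrBr -!scalerAl -!scalerAr.
by rewrite !mul1r !mulr1 sqrM; apply/matrixP => i j; rewrite !mxE; ring.
Qed.

Lemma expr_odd_addr1 k :
  M ^+ (2 * k + 1)%N + 1 = M ^+ k * ((a k.+1 - a k) *: (M + 1)).
Proof.
rewrite -{1}(mulM_invX k) addn1 mul2n -addnn -addnS exprD -mulrDr.
by congr (_ * _); rewrite expr_inv exprSM; apply/matrixP => i j; rewrite !mxE; ring.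
Qed.

Lemma expr_odd_eqN1 k :
  M ^+ (2 * k + 1)%N = -1 <-> (a k.+1 - a k) *: (M + 1) = 0.
Proof.
have -> : (M ^+ (2 * k + 1)%N = -1) <-> (M ^+ (2 * k + 1)%N + 1 = 0).
  by split=> [-> | /eqP]; [rewrite addNr | rewrite addr_eq0 => /eqP].
rewrite expr_odd_addr1; split => [Mk0 | ->]; last by rewrite mulr0.
have invMk : N ^+ k * M ^+ k = 1.
  by rewrite -exprMn_comm -?commM_inv ?mulM_inv ?expr1n //; apply/esym/commM_inv.
by rewrite -[LHS]mul1r -{1}invMk -mulrA Mk0 mulr0.
Qed.

End QuadraticMatrix.

Theorem mainTheorem19 (R : comNzRingType) (M : 'M[R]_2) (k : nat) :
  \det M = 1 ->
  (not_zero_divisor (M 0 1) \/ not_zero_divisor (M 1 0)) ->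
  (M ^+ (2 * k + 1)%N = - (1%:M) <->
   evalZ (fpoly k.+1) (\tr M) - evalZ (fpoly k) (\tr M) = 0).
Proof.
move=> detM nzdM; rewrite (expr_odd_eqN1 (mx22_sqr_det1 detM)).
split=> [|->]; last by rewrite scale0r.
apply: scale_mx22_eq0.
by rewrite !mxE /= !addr0.
Qed.
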